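(* Let $q$ be a power of $2$. Let $b\in\mathbb{F}_q^*$ and $\delta\in\mathbb{F}_{q^2}$ with $b\,\mathrm{Tr}_{q^2/q}(\delta)^2=1$. Then the compositional inverse of $$P(x)=b(x^q+x+\delta)^{q+2}+x$$ over $\mathbb{F}_{q^2}$ is $$P^{-1}(x)=b\left(\left(\mathrm{Tr}_{q^2/q}(\delta)(x^q+x)+\delta^{q+1}\right)^{q/2}+\delta\right)^{q+2}+x.$$
   Context: $\mathrm{Tr}_{q^2/q}(y)=y+y^q$. The compositional inverse of a permutation polynomial $f$ of $\mathbb{F}_{Q}$ is the unique polynomial $f^{-1}$ (modulo $x^Q-x$) with $f(f^{-1}(c))=f^{-1}(f(c))=c$ for all $c\in\mathbb{F}_Q$; in particular the statement includes that $P$ permutes $\mathbb{F}_{q^2}$. *)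

From HB Require Import structures.
From mathcomp Require Import all_boot all_order all_algebra all_field.
Set Implicit Arguments. Unset Strict Implicit. Unset Printing Implicit Defensive.
Import GRing.Theory.
Local Open Scope ring_scope.

Definition trq2q (F : nzRingType) (q : nat) (y : F) : F := y + y ^+ q.

Definition Ppoly (F : nzRingType) (q : nat) (b delta : F) (x : F) : F :=
  b * (x ^+ q + x + delta) ^+ (q + 2) + x.

Definition Pinv (F : nzRingType) (q : nat) (b delta : F) (x : F) : F :=
  b * ((trq2q q delta * (x ^+ q + x) + delta ^+ (q + 1)) ^+ (q %/ 2) + delta)
      ^+ (q + 2) + x.

(* Both P and the claimed inverse have the shape x |-> G(Tr x) + x, where Tr x
   lies in F_q.  In characteristic 2 two such maps with functions G1, G2 are
   mutually inverse as soon as G1 (Tr (G2 v) + v) = G2 v for every v in F_q.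
   With T = Tr(delta), N = delta^(q+1) and w in F_q one computes
   Tr (b (w + delta)^(q+2)) = b T (w^2 + T w + N); together with b T^2 = 1 this
   makes T Tr(P x) + N the square of Tr x, and on F_q the power q/2 is the
   square root. *)
From HB Require Import structures.
From mathcomp Require Import all_boot all_order all_algebra all_field.
From mathcomp Require Import ring.
Import GRing.Theory.
Local Open Scope ring_scope.

Section TraceShift.

Variables (F : comNzRingType) (q : nat).
Hypothesis pchar2 : 2 \in [pchar F].
Hypothesis frobD : {morph (fun x : F => x ^+ q) : x y / x + y}.
Hypothesis frobK : involutive (fun x : F => x ^+ q).

Local Notation tr := (@trq2q F q).

(* [ring] does not reduce coefficients modulo 2, so each characteristic-2
   identity below is proved by first adding the right vanishing term 2 z. *)
Let addr_2mul x z : x + 2%:R * z = x :> F.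
Proof. by rewrite pcharf0 // mul0r addr0. Qed.

Lemma trqD : {morph tr : x y / x + y}.
Proof. by move=> x y; rewrite /trq2q frobD addrACA. Qed.

Lemma trq_frob x : tr x ^+ q = tr x.
Proof. by rewrite /trq2q frobD frobK addrC. Qed.

Definition trshift (G : F -> F) (x : F) : F := G (tr x) + x.

Lemma trshift_cancel (G1 G2 : F -> F) :
  (forall v, v ^+ q = v -> G1 (tr (G2 v) + v) = G2 v) ->
  cancel (trshift G2) (trshift G1).
Proof.
move=> G12 x; rewrite /trshift trqD G12 ?trq_frob //.
by rewrite addrA addrr_pchar2 // add0r.
Qed.

Variables (b delta : F).
Hypothesis frob_b : b ^+ q = b.

Local Notation T := (tr delta).
Local Notation N := (delta ^+ (q + 1)).

Lemma frob_norm : N ^+ q = N.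
Proof. by rewrite exprAC addn1 exprS frobK exprSr. Qed.

Definition Pshift (w : F) : F := b * (w + delta) ^+ (q + 2).

Lemma trq_Pshift w : w ^+ q = w -> tr (Pshift w) = b * T * (w ^+ 2 + w * T + N).
Proof.
move=> frob_w; rewrite /trq2q /Pshift !exprD !expr1 !exprMn frob_b frobK !frobD frob_w.
by rewrite -[RHS](addr_2mul _ (b * w * (w + delta) * (w + delta ^+ q))); ring.
Qed.

Lemma Ppoly_trshift x : Ppoly q b delta x = trshift Pshift x.
Proof. by rewrite /Ppoly /trshift /Pshift /trq2q [x + _]addrC. Qed.

Hypothesis q_even : ~~ odd q.
Hypothesis bT2 : b * T ^+ 2 = 1.

Let halfqK : (q %/ 2 * 2)%N = q.
Proof. by rewrite divnK // dvdn2. Qed.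

Definition Phalf (v : F) : F := (T * v + N) ^+ (q %/ 2).

Lemma Pinv_trshift c : Pinv q b delta c = trshift (Pshift \o Phalf) c.
Proof. by rewrite /Pinv /trshift /Pshift /Phalf /= [c ^+ q + _]addrC. Qed.

Lemma Phalf_Pshift u : u ^+ q = u -> Phalf (tr (Pshift u) + u) = u.
Proof.
move=> frob_u; rewrite /Phalf trq_Pshift //.
have -> : T * (b * T * (u ^+ 2 + u * T + N) + u) + N = u ^+ 2.
  by rewrite -[RHS](addr_2mul _ (u * T + N)); ring: bT2.
by rewrite -exprM mulnC halfqK frob_u.
Qed.

Lemma trq_Pshift_Phalf v : v ^+ q = v -> tr (Pshift (Phalf v)) + v = Phalf v.
Proof.
move=> frob_v.
have frob_z : (T * v + N) ^+ q = T * v + N by rewrite frobD exprMn trq_frob frob_v frob_norm.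
have Phalf_sqr : Phalf v ^+ 2 = T * v + N by rewrite -exprM halfqK frob_z.
have frob_Phalf : Phalf v ^+ q = Phalf v by rewrite /Phalf exprAC frob_z.
rewrite (trq_Pshift _ frob_Phalf) Phalf_sqr -[RHS](addr_2mul _ (v + b * T * N)).
by ring: bT2.
Qed.

Lemma PpolyK : cancel (Ppoly q b delta) (Pinv q b delta).
Proof.
move=> x; rewrite Pinv_trshift Ppoly_trshift.
by apply: trshift_cancel => u /Phalf_Pshift /= ->.
Qed.

Lemma PinvK : cancel (Pinv q b delta) (Ppoly q b delta).
Proof.
move=> c; rewrite Ppoly_trshift Pinv_trshift.
by apply: trshift_cancel => v /trq_Pshift_Phalf /= ->.
Qed.

End TraceShift.

Theorem theorem3p6 (F : finFieldType) (k q : nat) (b delta : F) :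
  q = (2 ^ k)%N ->
  #|F| = (q ^ 2)%N ->
  b != 0 -> b ^+ q = b ->
  b * trq2q q delta ^+ 2 = 1 ->
  (forall c : F, Ppoly q b delta (Pinv q b delta c) = c) /\
  (forall c : F, Pinv q b delta (Ppoly q b delta c) = c).
Proof.
(* b != 0 is implied by b T^2 = 1. *)
move=> def_q cardF _ frob_b bT2.
have pchar2 : 2 \in [pchar F].
  by apply: (@card_finPcharP _ _ (k * 2)) => //; rewrite cardF def_q expnM.
have k_gt0 : (0 < k)%N.
  by case: k def_q => // def_q; have := card_finNzRing_gt1 F; rewrite cardF def_q.
have frobD : {morph (fun x : F => x ^+ q) : x y / x + y}.
  by move=> x y; apply: exprDn_pchar; rewrite def_q pnatX pnatE // pchar2.
have frobK : involutive (fun x : F => x ^+ q).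
  by move=> x; rewrite -exprM mulnn -cardF expf_card.
have q_even : ~~ odd q by rewrite def_q oddX orbF -lt0n.
by split; [exact: PinvK | exact: PpolyK].
Qed.
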